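(* Let $(\mathfrak{A},\mathfrak{A}_0)$ be a CQ*-algebra as in the context, let $X\in\mathfrak{A}$, $\alpha\in\mathbb{C}$ and $\omega\in E(\mathfrak{A}_0)$. The following are equivalent: (i) $\overline{\omega}$ is an eigenstate of $X$ with eigenvalue $\alpha$, i.e. $\overline{\omega}(AX)=\alpha\,\overline{\omega}(A)$ for all $A\in\mathfrak{A}_0$; (ii) the unbounded vector $\pi_{\overline{\omega}}(X)\lambda_\omega(I)$ is bounded and $[\pi_{\overline{\omega}}(X)\lambda_\omega(I)]=\alpha\lambda_\omega(I)$.
   Context: Let $\mathfrak{A}_0$ be a unital C*-algebra with C*-norm $\|\cdot\|_0$ and unit $I$, and let $\|\cdot\|$ be another norm on $\mathfrak{A}_0$ with $\|A\|\le\|A\|_0$, $\|AB\|\le\|A\|\,\|B\|_0$, $\|A^*\|=\|A\|$. Let $\mathfrak{A}$ be the $\|\cdot\|$-completion of $\mathfrak{A}_0$; for $X\in\mathfrak{A}$, $A\in\mathfrak{A}_0$ and $A_n\to X$ in $\|\cdot\|$ ($A_n\in\mathfrak{A}_0$), $XA:=\lim A_nA$, $AX:=\lim AA_n$, $X^*:=\lim A_n^*$. $E(\mathfrak{A}_0)$ is the set of positive linear functionals $\omega$ on $\mathfrak{A}_0$ with $\omega(I)=1$ and $|\omega(A)|\le\gamma\|A\|$ for some $\gamma>0$ and all $A$; $\overline{\omega}$ is its continuous extension to $\mathfrak{A}$, $\overline{\omega}(X)=\lim\omega(A_n)$. $(\pi_\omega,\lambda_\omega,\mathcal{H}_\omega)$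 is the GNS construction of $\omega$ on $\mathfrak{A}_0$: $\lambda_\omega:\mathfrak{A}_0\to\mathcal{H}_\omega$ linear with dense range, $(\lambda_\omega(A)|\lambda_\omega(B))=\omega(B^*A)$. For $X\in\mathfrak{A}$, $\pi_{\overline{\omega}}(X)$ maps each $\lambda_\omega(B)$, $B\in\mathfrak{A}_0$, to the conjugate-linear functional (unbounded vector) on $\lambda_\omega(\mathfrak{A}_0)$ given by $\langle\pi_{\overline{\omega}}(X)\lambda_\omega(B),\lambda_\omega(C)\rangle=\overline{\omega}(C^*XB)=\lim_n(\pi_\omega(A_n)\lambda_\omega(B)|\lambda_\omega(C))$. A conjugate-linear functional $v$ on the dense subspace $\lambda_\omega(\mathfrak{A}_0)$ is called bounded if it extends continuously to $\mathcal{H}_\omega$; then $[v]$ denotes the unique vector of $\mathcal{H}_\omega$ with $\langle v,\eta\rangle=([v]|\eta)$ for all $\eta\in\lambda_\omega(\mathfrak{A}_0)$. *)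

From HB Require Import structures.
From mathcomp Require Import all_boot all_order all_algebra.
From mathcomp Require Import complex.
From mathcomp Require Import reals.
Set Implicit Arguments. Unset Strict Implicit. Unset Printing Implicit Defensive.
Import Order.TTheory GRing.Theory Num.Theory.
Local Open Scope ring_scope.

Section Defs.
Variable R : realType.
Local Notation C := R[i].

Definition cabs (z : C) : R := ComplexField.Normc.normc z.
Definition cconj (z : C) : C := conjc z.

Definition is_norm (V : lmodType C) (nv : V -> R) :=
  [/\ forall x, 0 <= nv x, forall x, nv x = 0 -> x = 0,
      forall (a : C) x, nv (a *: x) = cabs a * nv x
    & forall x y, nv (x + y) <= nv x + nv y].

Definition cvg_in (V : zmodType) (nv : V -> R) (u : nat -> V) (x : V) :=
  forall e : R, 0 < e -> exists N, forall k, (N <= k)%N -> nv (u k - x) < e.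

Definition cauchy_in (V : zmodType) (nv : V -> R) (u : nat -> V) :=
  forall e : R, 0 < e -> exists N, forall k l, (N <= k)%N -> (N <= l)%N ->
    nv (u k - u l) < e.

Definition complete_in (V : zmodType) (nv : V -> R) :=
  forall u, cauchy_in nv u -> exists x, cvg_in nv u x.

Definition cvgC (z : nat -> C) (w : C) :=
  forall e : R, 0 < e -> exists N, forall k, (N <= k)%N -> cabs (z k - w) < e.

Definition dense_range (T : Type) (V : zmodType) (nv : V -> R) (f : T -> V) :=
  forall x (e : R), 0 < e -> exists t, nv (f t - x) < e.

Definition is_Cstar_alg (A0 : algType C) (star : A0 -> A0) (n0 : A0 -> R) :=
  [/\ (forall x y, star (x + y) = star x + star y),
      (forall (a : C) x, star (a *: x) = cconj a *: star x),
      (forall x y, star (x * y) = star y * star x)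
    & (forall x, star (star x) = x)] /\
  [/\ is_norm n0,
      (forall x y, n0 (x * y) <= n0 x * n0 y),
      (forall x, n0 (star x * x) = n0 x ^+ 2)
    & complete_in n0].

Definition is_CQ_norm (A0 : algType C) (star : A0 -> A0) (n0 n : A0 -> R) :=
  [/\ is_norm n,
      (forall x, n x <= n0 x),
      (forall x y, n (x * y) <= n x * n0 y)
    & (forall x, n (star x) = n x)].

Definition is_completion (A0 : algType C) (n : A0 -> R)
    (A : lmodType C) (nA : A -> R) (j : A0 -> A) :=
  [/\ is_norm nA, complete_in nA,
      (forall x y, j (x + y) = j x + j y) /\
      (forall (a : C) x, j (a *: x) = a *: j x),
      (forall x, nA (j x) = n x)
    & dense_range nA j].

(* lmul A X = AX := lim_n A A_n  whenever A_n --> X *)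
Definition is_lmul (A0 : algType C) (A : lmodType C) (nA : A -> R)
    (j : A0 -> A) (lmul : A0 -> A -> A) :=
  forall (X : A) (u : nat -> A0) (a : A0),
    cvg_in nA (fun k => j (u k)) X -> cvg_in nA (fun k => j (a * u k)) (lmul a X).

Definition in_E (A0 : algType C) (star : A0 -> A0) (n : A0 -> R) (om : A0 -> C) :=
  [/\ (forall x y, om (x + y) = om x + om y),
      (forall (a : C) x, om (a *: x) = a * om x),
      (forall x, 0 <= om (star x * x)),
      om 1 = 1
    & exists gamma : R, 0 < gamma /\ forall x, cabs (om x) <= gamma * n x].

Definition is_ext (A0 : algType C) (A : lmodType C) (nA : A -> R)
    (j : A0 -> A) (om : A0 -> C) (ombar : A -> C) :=
  forall (X : A) (u : nat -> A0),
    cvg_in nA (fun k => j (u k)) X -> cvgC (fun k => om (u k)) (ombar X).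

Definition ip_norm (H : lmodType C) (ip : H -> H -> C) (x : H) : R :=
  Num.sqrt (complex.Re (ip x x)).

Definition is_Hilbert (H : lmodType C) (ip : H -> H -> C) :=
  [/\ (forall x y z, ip (x + y) z = ip x z + ip y z),
      (forall (a : C) x z, ip (a *: x) z = a * ip x z)
    & (forall x y, ip y x = cconj (ip x y))] /\
  [/\ (forall x, 0 <= ip x x),
      (forall x, ip x x = 0 -> x = 0)
    & complete_in (ip_norm ip)].

Definition is_GNS (A0 : algType C) (star : A0 -> A0) (om : A0 -> C)
    (H : lmodType C) (ip : H -> H -> C) (lam : A0 -> H) :=
  [/\ (forall x y, lam (x + y) = lam x + lam y),
      (forall (a : C) x, lam (a *: x) = a *: lam x),
      dense_range (ip_norm ip) lam
    & (forall x y, ip (lam x) (lam y) = om (star y * x))].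

(* A conjugate-linear functional on lambda(A0), given by its values
   v c = < v , lambda c >, is bounded if it extends continuously to H. *)
Definition bounded_uv (A0 : Type) (H : lmodType C) (ip : H -> H -> C)
    (lam : A0 -> H) (v : A0 -> C) :=
  exists f : H -> C,
    (forall x (e : R), 0 < e -> exists d : R, 0 < d /\
        forall y, ip_norm ip (y - x) < d -> cabs (f y - f x) < e)
    /\ forall c, f (lam c) = v c.

(* [v] = w : w is the (unique) vector with < v , eta > = (w | eta) on lambda(A0) *)
Definition bracket_is (A0 : Type) (H : lmodType C) (ip : H -> H -> C)
    (lam : A0 -> H) (v : A0 -> C) (w : H) :=
  forall c, v c = ip w (lam c).

(* < pi_ombar(X) lambda(B) , lambda(C) > = ombar (C^* X B); for B = I this is
   ombar(C^* X) *)
Definition pi_bar_I (A0 : algType C) (A : lmodType C) (star : A0 -> A0)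
    (lmul : A0 -> A -> A) (ombar : A -> C) (X : A) : A0 -> C :=
  fun c => ombar (lmul (star c) X).

End Defs.

From HB Require Import structures.
From mathcomp Require Import all_boot all_order all_algebra.
From mathcomp Require Import complex.
From mathcomp Require Import reals.
From mathcomp Require Import ring lra.
Import Order.TTheory GRing.Theory Num.Theory.
Local Open Scope ring_scope.

(* By the GNS relation and ombar (j C) = om C, condition (i) says that the
   functional C |-> ombar (star C X) equals
   C |-> alpha om (star C) = (alpha lambda(I) | lambda(C)), i.e. that it is
   represented by the vector alpha lambda(I); a functional represented by a
   vector is bounded by the Cauchy-Schwarz inequality.  Conversely, (ii)
   evaluated at C = star A gives (i) since star is involutive. *)

Section ComplexLimits.
Context {R : realType}.

Lemma cabs_ge0 (z : R[i]) : 0 <= cabs z.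
Proof. by case: z => a b; exact: sqrtr_ge0. Qed.

Lemma cvgC_cst_uniq (z w : R[i]) : cvgC (fun=> z) w -> w = z.
Proof.
move=> cvg_zw; apply/esym/subr0_eq/ComplexField.Normc.eq0_normc/eqP.
rewrite eq_le cabs_ge0 andbT leNgt; apply/negP => dist_gt0.
have [N zN] := cvg_zw _ dist_gt0.
by have := zN N (leqnn N); rewrite ltxx.
Qed.

Lemma is_norm0 (V : lmodType R[i]) (nv : V -> R) : is_norm nv -> nv 0 = 0.
Proof.
case=> _ _ nvZ _.
by rewrite -(scale0r (0 : V)) nvZ /cabs ComplexField.Normc.normc0 mul0r.
Qed.

Lemma cvg_in_cst (V : lmodType R[i]) (nv : V -> R) (x : V) :
  is_norm nv -> cvg_in nv (fun=> x) x.
Proof. by move=> nv_norm e e_gt0; exists 0%N => k _; rewrite subrr is_norm0. Qed.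

Lemma is_ext_j {A0 : algType R[i]} {A : lmodType R[i]} {nA : A -> R}
    {j : A0 -> A} {om : A0 -> R[i]} {ombar : A -> R[i]} :
  is_norm nA -> is_ext nA j om ombar -> forall a, ombar (j a) = om a.
Proof.
move=> nA_norm ext a; apply: cvgC_cst_uniq.
by apply: (ext _ (fun=> a)); exact: cvg_in_cst.
Qed.

End ComplexLimits.

Section InnerProduct.
Context {R : realType} {H : lmodType R[i]} {ip : H -> H -> R[i]}.
Hypothesis HH : is_Hilbert ip.

Lemma ipDl x y z : ip (x + y) z = ip x z + ip y z.
Proof. by case: HH => -[]. Qed.

Lemma ipZl a x z : ip (a *: x) z = a * ip x z.
Proof. by case: HH => -[]. Qed.

Lemma ipC x y : ip y x = (ip x y)^*.
Proof. by case: HH => -[_ _ ->]. Qed.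

Lemma ip_ge0 x : 0 <= ip x x.
Proof. by case: HH => _ []. Qed.

Lemma ip_eq0 x : ip x x = 0 -> x = 0.
Proof. by case: HH => _ [_ + _]; apply. Qed.

Lemma ipDr x y z : ip x (y + z) = ip x y + ip x z.
Proof. by rewrite ipC ipDl rmorphD /= -!ipC. Qed.

Lemma ipZr a x y : ip x (a *: y) = a^* * ip x y.
Proof. by rewrite ipC ipZl rmorphM /= -ipC. Qed.

Lemma ipBl x y z : ip (x - y) z = ip x z - ip y z.
Proof. by rewrite ipDl -scaleN1r ipZl mulN1r. Qed.

Lemma ipBr x y z : ip x (y - z) = ip x y - ip x z.
Proof. by rewrite ipDr -scaleN1r ipZr rmorphN1 mulN1r. Qed.

Lemma ip0r x : ip x 0 = 0.
Proof. by rewrite -(scale0r (0 : H)) ipZr rmorph0 mul0r. Qed.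

Lemma ip_norm_ge0 x : 0 <= ip_norm ip x.
Proof. exact: sqrtr_ge0. Qed.

Lemma ip_normE x : ((ip_norm ip x) ^+ 2)%:C%C = ip x x.
Proof.
have real_xx : ip x x \is Num.real by exact/ger0_real/ip_ge0.
rewrite sqr_sqrtr ?RRe_real // -ler0c RRe_real //; exact: ip_ge0.
Qed.

Lemma ip_Cauchy_Schwarz x y : `|ip x y| ^+ 2 <= ip x x * ip y y.
Proof.
have [->|y_neq0] := eqVneq y 0.
  by rewrite ip0r normr0 expr0n mulr_ge0 ?ip_ge0.
set M := ip y y; set w := ip x y.
have M_gt0 : 0 < M.
  by rewrite lt_def ip_ge0 andbT; apply: contra_neq y_neq0 => /ip_eq0.
have expand : ip (M *: x - w *: y) (M *: x - w *: y) = M * (ip x x * M - w * w^*).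
  rewrite !ipBl !ipBr !ipZl !ipZr [ip y x]ipC -/M -/w (geC0_conj (ltW M_gt0)).
  ring.
by rewrite normCK -subr_ge0 -(pmulr_rge0 _ M_gt0) -expand ip_ge0.
Qed.

Lemma cabs_ip_le x y : cabs (ip x y) <= ip_norm ip x * ip_norm ip y.
Proof.
rewrite -(ler_pXn2r (_ : 0 < 2)%N) ?nnegrE ?cabs_ge0 ?mulr_ge0 ?ip_norm_ge0 //.
rewrite exprMn -lecR rmorphXn [in leRHS]rmorphM /= !ip_normE.
exact: ip_Cauchy_Schwarz.
Qed.

Lemma ip_continuousr (w x : H) (e : R) : 0 < e ->
  exists d : R, 0 < d /\
    forall y, ip_norm ip (y - x) < d -> cabs (ip w y - ip w x) < e.
Proof.
move=> e_gt0; have Nw_ge0 := ip_norm_ge0 w.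
exists (e / (ip_norm ip w + 1)); split; first by rewrite divr_gt0 //; lra.
move=> y; rewrite ltr_pdivlMr; last by lra.
rewrite -ipBr => dist_lt; apply: le_lt_trans (cabs_ip_le _ _) _.
have := ip_norm_ge0 (y - x); nra.
Qed.

Lemma bracket_is_bounded {A0 : Type} {lam : A0 -> H} {v : A0 -> R[i]} {w : H} :
  bracket_is ip lam v w -> bounded_uv ip lam v.
Proof.
move=> vw; exists (ip w); split => [x e|c]; first exact: ip_continuousr.
by rewrite vw.
Qed.

End InnerProduct.

Theorem lemma4p2 (R : realType)
    (A0 : algType R[i]) (star : A0 -> A0) (n0 n : A0 -> R)
    (HA0 : is_Cstar_alg star n0) (Hn : is_CQ_norm star n0 n)
    (A : lmodType R[i]) (nA : A -> R) (j : A0 -> A)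
    (HA : is_completion n nA j)
    (lmul : A0 -> A -> A) (Hlmul : is_lmul nA j lmul)
    (om : A0 -> R[i]) (Hom : in_E star n om)
    (ombar : A -> R[i]) (Hombar : is_ext nA j om ombar)
    (H : lmodType R[i]) (ip : H -> H -> R[i]) (HH : is_Hilbert ip)
    (lam : A0 -> H) (Hgns : is_GNS star om ip lam)
    (X : A) (alpha : R[i]) :
  (forall a : A0, ombar (lmul a X) = alpha * ombar (j a))
  <->
  (bounded_uv ip lam (pi_bar_I star lmul ombar X)
   /\ bracket_is ip lam (pi_bar_I star lmul ombar X) (alpha *: lam 1)).
Proof.
have [[_ _ _ starK] _] := HA0.
have [nA_norm _ _ _ _] := HA.
have ombar_j := is_ext_j nA_norm Hombar.
have ip_unit c : ip (alpha *: lam 1) (lam c) = alpha * om (star c).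
  by case: Hgns => _ _ _ gns; rewrite ipZl // gns mulr1.
split => [eigen | [_ bracket] a].
  have bracket : bracket_is ip lam (pi_bar_I star lmul ombar X) (alpha *: lam 1).
    by move=> c; rewrite /pi_bar_I eigen ombar_j ip_unit.
  by split; [exact: (bracket_is_bounded HH bracket) | exact: bracket].
by have := bracket (star a); rewrite /pi_bar_I starK ip_unit starK ombar_j.
Qed.
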